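(* Let $c>0$ and $\lambda\in C^2((0,\infty))$. Let $f_{++},f_{+-},f_{-+},f_{--}$ be sufficiently smooth (say $C^4$) functions of $(x,y,t)\in\mathbb{R}^2\times(0,\infty)$ satisfying $$\begin{aligned} \partial_t f_{++}&=-\tfrac c2\partial_x f_{++}-\tfrac c2\partial_y f_{++}+\tfrac{\lambda(t)}{2}(f_{-+}+f_{+-}-2f_{++}),\\ \partial_t f_{+-}&=-\tfrac c2\partial_x f_{+-}+\tfrac c2\partial_y f_{+-}+\tfrac{\lambda(t)}{2}(f_{--}+f_{++}-2f_{+-}),\\ \partial_t f_{-+}&=\tfrac c2\partial_x f_{-+}-\tfrac c2\partial_y f_{-+}+\tfrac{\lambda(t)}{2}(f_{++}+f_{--}-2f_{-+}),\\ \partial_t f_{--}&=\tfrac c2\partial_x f_{--}+\tfrac c2\partial_y f_{--}+\tfrac{\lambda(t)}{2}(f_{+-}+f_{-+}-2f_{--}). \end{aligned}$$ Then $p=f_{++}+f_{+-}+f_{-+}+f_{--}$ satisfies $$\begin{aligned} \frac{\partial^4 p}{\partial t^4}=&-4\lambda\frac{\partial^3 p}{\partial t^3}+\Big(\frac{c^2}{2}\Delta-5\lambda^2-4\lambda'\Big)\frac{\partial^2 p}{\partial t^2}+\Big(\lambda c^2\Delta-5\lambda\lambda'-2\lambda^3-\lambda''\Big)\frac{\partial p}{\partial t}\\ &-\frac{c^4}{16}\Big(\frac{\partial^2}{\partial x^2}-\frac{\partial^2}{\partial y^2}\Big)^2p+\frac{c^2}{2}\big(\lambda^2+\lambda'\big)\Delta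 p, \end{aligned}$$ where $\lambda=\lambda(t)$, $\lambda'=\frac{d\lambda}{dt}$, $\lambda''=\frac{d^2\lambda}{dt^2}$ and $\Delta=\frac{\partial^2}{\partial x^2}+\frac{\partial^2}{\partial y^2}$.
   Context: Interpretation: $f_{ab}$ are the joint densities of the position of a planar particle moving with velocity components $\pm c/2$ in the four diagonal directions $(a\,b)\in\{(++),(+-),(-+),(--)\}$, switching at the events of a non-homogeneous Poisson process of rate $\lambda(t)$ to one of the two orthogonal directions with probability $1/2$ each; $p$ is then the (absolutely continuous part of the) density of the position. *)

From Stdlib Require Import Reals Lra ClassicalEpsilon.
Open Scope R_scope.

(* Functions of (x, y, t) in R^2 x (0, oo); values at t <= 0 are irrelevant. *)
Definition fun3 := R -> R -> R -> R.

(* Partial derivatives (the value of the limit when it exists; chosen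
   by Hilbert's epsilon, so it is the genuine partial derivative
   whenever the latter exists). *)
Definition dx (f : fun3) : fun3 := fun x y t =>
  epsilon (inhabits 0) (fun l => derivable_pt_lim (fun s => f s y t) x l).
Definition dy (f : fun3) : fun3 := fun x y t =>
  epsilon (inhabits 0) (fun l => derivable_pt_lim (fun s => f x s t) y l).
Definition dt (f : fun3) : fun3 := fun x y t =>
  epsilon (inhabits 0) (fun l => derivable_pt_lim (fun s => f x y s) t l).

Definition cont3 (f : fun3) : Prop :=
  forall x y t, 0 < t -> forall eps, 0 < eps -> exists del, 0 < del /\
    forall x' y' t', Rabs (x' - x) < del -> Rabs (y' - y) < del ->
      Rabs (t' - t) < del -> Rabs (f x' y' t' - f x y t) < eps.

Definition partials_exist (f : fun3) : Prop :=
  forall x y t, 0 < t ->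
    (exists l, derivable_pt_lim (fun s => f s y t) x l) /\
    (exists l, derivable_pt_lim (fun s => f x s t) y l) /\
    (exists l, derivable_pt_lim (fun s => f x y s) t l).

Fixpoint Ck (k : nat) (f : fun3) : Prop :=
  match k with
  | O => cont3 f
  | S k' => cont3 f /\ partials_exist f /\ Ck k' (dx f) /\ Ck k' (dy f) /\ Ck k' (dt f)
  end.

Definition Lap (q : fun3) : fun3 := fun x y t => dx (dx q) x y t + dy (dy q) x y t.
Definition Hyp (q : fun3) : fun3 := fun x y t => dx (dx q) x y t - dy (dy q) x y t.

(* Pass to the Walsh-Hadamard modes of the four densities in the velocity signs:
   P = p, Q1 and Q2 (signed by the sign of the x-, resp. y-velocity) and Q3
   (signed by the product of both signs).  With K = c/2 they satisfy
     P_t  = -K (Q1_x + Q2_y),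
     Q1_t = -K (P_x + Q3_y) - lam Q1,      Q2_t = -K (Q3_x + P_y) - lam Q2,
     Q3_t = -K (Q2_x + Q1_y) - 2 lam Q3,
   the damping rates 0, lam, lam, 2 lam being the eigenvalues of the switching.
   Differentiating P_t three more times in t, substituting the system and
   commuting partial derivatives (Schwarz, the densities being C^4), expresses
   p_t, ..., p_tttt through S = Q1_x + Q2_y, M = Q3_xy, N = (Q2_x + Q1_y)_xy,
   p_xyxy and Laplacians of these; the stated combination eliminates all of
   them, once (d_xx - d_yy)^2 p is written as Lap (Lap p) - 4 p_xyxy. *)

From Stdlib Require Import Reals Lra Lia.
From Stdlib Require Import ClassicalEpsilon FunctionalExtensionality PropExtensionality.
From Coquelicot Require Import Coquelicot.
Open Scope R_scope.

Lemma epsilon_derivable_pt_lim (g : R -> R) (x l : R) :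
  derivable_pt_lim g x l -> epsilon (inhabits 0) (fun l => derivable_pt_lim g x l) = l.
Proof.
  intros H. apply (uniqueness_limite g x); [apply epsilon_spec; now exists l | exact H].
Qed.

Lemma dx_eq (f : fun3) (g : R -> R) x y t l r :
  (forall s, f s y t = g s) -> derivable_pt_lim g x l -> l = r -> dx f x y t = r.
Proof.
  intros E H <-. unfold dx. replace (fun s => f s y t) with g by (extensionality s; auto).
  exact (epsilon_derivable_pt_lim _ _ _ H).
Qed.

Lemma dy_eq (f : fun3) (g : R -> R) x y t l r :
  (forall s, f x s t = g s) -> derivable_pt_lim g y l -> l = r -> dy f x y t = r.
Proof.
  intros E H <-. unfold dy. replace (fun s => f x s t) with g by (extensionality s; auto).
  exact (epsilon_derivable_pt_lim _ _ _ H).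
Qed.

Lemma dx_ext (f g : fun3) x y t :
  (forall s, f s y t = g s y t) -> dx f x y t = dx g x y t.
Proof.
  intros E. unfold dx. now replace (fun s => f s y t) with (fun s => g s y t)
    by (extensionality s; now rewrite E).
Qed.

Lemma dy_ext (f g : fun3) x y t :
  (forall s, f x s t = g x s t) -> dy f x y t = dy g x y t.
Proof.
  intros E. unfold dy. now replace (fun s => f x s t) with (fun s => g x s t)
    by (extensionality s; now rewrite E).
Qed.

Lemma derivable_pt_lim_ext_pos (F G : R -> R) t l : 0 < t ->
  (forall s, 0 < s -> F s = G s) -> derivable_pt_lim F t l -> derivable_pt_lim G t l.
Proof.
  intros ht E H eps heps. destruct (H eps heps) as [d hd].
  assert (hm : 0 < Rmin d t) by (apply Rmin_pos; [apply cond_pos | lra]).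
  exists (mkposreal _ hm). intros h hh0 hh; simpl in hh.
  assert (hd' : Rabs h < d) by (eapply Rlt_le_trans; [exact hh | apply Rmin_l]).
  assert (ht' : Rabs h < t) by (eapply Rlt_le_trans; [exact hh | apply Rmin_r]).
  apply Rabs_def2 in ht'. rewrite <- !E by lra. now apply hd.
Qed.

Lemma dt_ext (f g : fun3) x y t : 0 < t ->
  (forall s, 0 < s -> f x y s = g x y s) -> dt f x y t = dt g x y t.
Proof.
  intros ht E. unfold dt. f_equal. extensionality l. apply propositional_extensionality.
  split; apply derivable_pt_lim_ext_pos; auto. intros; symmetry; auto.
Qed.

Lemma dt_eq (f : fun3) (g : R -> R) x y t l r : 0 < t ->
  (forall s, 0 < s -> f x y s = g s) -> derivable_pt_lim g t l -> l = r -> dt f x y t = r.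
Proof.
  intros ht E H <-. unfold dt. apply epsilon_derivable_pt_lim.
  apply (derivable_pt_lim_ext_pos g); auto. intros; symmetry; auto.
Qed.

Lemma Ck_succ k f : Ck (S k) f -> Ck k f.
Proof.
  revert f; induction k as [|k IH]; intros f H; [exact (proj1 H)|].
  destruct H as [h0 [h1 [h2 [h3 h4]]]].
  exact (conj h0 (conj h1 (conj (IH _ h2) (conj (IH _ h3) (IH _ h4))))).
Qed.

Lemma Ck_le n m f : (n <= m)%nat -> Ck m f -> Ck n f.
Proof. induction 1; auto using Ck_succ. Qed.

Lemma Ck_dx k f : Ck (S k) f -> Ck k (dx f). Proof. intros H; apply H. Qed.
Lemma Ck_dy k f : Ck (S k) f -> Ck k (dy f). Proof. intros H; apply H. Qed.
Lemma Ck_dt k f : Ck (S k) f -> Ck k (dt f). Proof. intros H; apply H. Qed.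

Lemma Ck_cont3 k f : Ck k f -> cont3 f.
Proof. destruct k; simpl; tauto. Qed.

Lemma Ck1_dx_lim f x y t : Ck 1 f -> 0 < t ->
  derivable_pt_lim (fun s => f s y t) x (dx f x y t).
Proof.
  intros H ht. destruct (proj1 (proj2 H) x y t ht) as [[l hl] _].
  now rewrite (dx_eq _ _ _ _ _ _ _ (fun _ => eq_refl) hl eq_refl).
Qed.

Lemma Ck1_dy_lim f x y t : Ck 1 f -> 0 < t ->
  derivable_pt_lim (fun s => f x s t) y (dy f x y t).
Proof.
  intros H ht. destruct (proj1 (proj2 H) x y t ht) as [_ [[l hl] _]].
  now rewrite (dy_eq _ _ _ _ _ _ _ (fun _ => eq_refl) hl eq_refl).
Qed.

Lemma Ck1_dt_lim f x y t : Ck 1 f -> 0 < t ->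
  derivable_pt_lim (fun s => f x y s) t (dt f x y t).
Proof.
  intros H ht. destruct (proj1 (proj2 H) x y t ht) as [_ [_ [l hl]]].
  now rewrite (dt_eq _ _ _ _ _ _ _ ht (fun _ _ => eq_refl) hl eq_refl).
Qed.

Lemma cont3_ext f g : (forall x y t, 0 < t -> f x y t = g x y t) -> cont3 f -> cont3 g.
Proof.
  intros E H x y t ht eps heps. destruct (H x y t ht eps heps) as [d [hd hf]].
  exists (Rmin d t). split; [apply Rmin_pos; lra|].
  intros x' y' t' hx hy hs.
  assert (hs' : Rabs (t' - t) < t) by (eapply Rlt_le_trans; [exact hs | apply Rmin_r]).
  apply Rabs_def2 in hs'. rewrite <- !E by lra.
  apply hf; (eapply Rlt_le_trans; [eassumption | apply Rmin_l]).
Qed.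

Lemma cont3_lin a b f g : cont3 f -> cont3 g ->
  cont3 (fun x y t => a * f x y t + b * g x y t).
Proof.
  intros Hf Hg x y t ht eps heps.
  set (C := Rabs a + Rabs b + 1).
  assert (hC : 0 < C) by (unfold C; pose proof (Rabs_pos a); pose proof (Rabs_pos b); lra).
  assert (he : 0 < eps / C) by (apply Rdiv_lt_0_compat; lra).
  destruct (Hf x y t ht _ he) as [d1 [hd1 h1]].
  destruct (Hg x y t ht _ he) as [d2 [hd2 h2]].
  exists (Rmin d1 d2). split; [apply Rmin_pos; lra|].
  intros x' y' t' hx hy hs.
  assert (df := h1 x' y' t'
    ltac:(eapply Rlt_le_trans; [exact hx | apply Rmin_l])
    ltac:(eapply Rlt_le_trans; [exact hy | apply Rmin_l])
    ltac:(eapply Rlt_le_trans; [exact hs | apply Rmin_l])).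
  assert (dg := h2 x' y' t'
    ltac:(eapply Rlt_le_trans; [exact hx | apply Rmin_r])
    ltac:(eapply Rlt_le_trans; [exact hy | apply Rmin_r])
    ltac:(eapply Rlt_le_trans; [exact hs | apply Rmin_r])).
  replace (a * f x' y' t' + b * g x' y' t' - (a * f x y t + b * g x y t))
    with (a * (f x' y' t' - f x y t) + b * (g x' y' t' - g x y t)) by ring.
  eapply Rle_lt_trans; [apply Rabs_triang|]. rewrite !Rabs_mult.
  assert (eps / C * C = eps) by (field; lra).
  pose proof (Rabs_pos a); pose proof (Rabs_pos b).
  pose proof (Rabs_pos (f x' y' t' - f x y t)); pose proof (Rabs_pos (g x' y' t' - g x y t)).
  unfold C in *; nra.
Qed.

Lemma partials_exist_ext f g :
  (forall x y t, 0 < t -> f x y t = g x y t) -> partials_exist f -> partials_exist g.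
Proof.
  intros E H x y t ht. destruct (H x y t ht) as [[l1 h1] [[l2 h2] [l3 h3]]].
  repeat split.
  - exists l1. replace (fun s => g s y t) with (fun s => f s y t)
      by (extensionality s; auto). exact h1.
  - exists l2. replace (fun s => g x s t) with (fun s => f x s t)
      by (extensionality s; auto). exact h2.
  - exists l3. exact (derivable_pt_lim_ext_pos _ _ t l3 ht (fun s hs => E x y s hs) h3).
Qed.

Lemma Ck_ext k f g : (forall x y t, 0 < t -> f x y t = g x y t) -> Ck k f -> Ck k g.
Proof.
  revert f g; induction k as [|k IH]; intros f g E H; [exact (cont3_ext f g E H)|].
  destruct H as [h0 [h1 [h2 [h3 h4]]]]. split; [|split; [|split; [|split]]].
  - exact (cont3_ext f g E h0).
  - exact (partials_exist_ext f g E h1).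
  - apply (IH _ _ (fun x y t ht => dx_ext f g x y t (fun s => E s y t ht)) h2).
  - apply (IH _ _ (fun x y t ht => dy_ext f g x y t (fun s => E x s t ht)) h3).
  - apply (IH _ _ (fun x y t ht => dt_ext f g x y t ht (fun s hs => E x y s hs)) h4).
Qed.

Lemma Ck_lin k a b f g : Ck k f -> Ck k g -> Ck k (fun x y t => a * f x y t + b * g x y t).
Proof.
  revert f g; induction k as [|k IH]; intros f g Hf Hg; [now apply cont3_lin|].
  assert (Hf1 : Ck 1 f) by (eapply Ck_le; [|exact Hf]; lia).
  assert (Hg1 : Ck 1 g) by (eapply Ck_le; [|exact Hg]; lia).
  destruct Hf as [f0 [f1 [f2 [f3 f4]]]], Hg as [g0 [g1 [g2 [g3 g4]]]].
  assert (Dx : forall x y t, 0 < t -> derivable_pt_lim (fun s => a * f s y t + b * g s y t) x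
      (a * dx f x y t + b * dx g x y t)).
  { intros; apply derivable_pt_lim_plus; apply derivable_pt_lim_scal; now apply Ck1_dx_lim. }
  assert (Dy : forall x y t, 0 < t -> derivable_pt_lim (fun s => a * f x s t + b * g x s t) y
      (a * dy f x y t + b * dy g x y t)).
  { intros; apply derivable_pt_lim_plus; apply derivable_pt_lim_scal; now apply Ck1_dy_lim. }
  assert (Dt : forall x y t, 0 < t -> derivable_pt_lim (fun s => a * f x y s + b * g x y s) t
      (a * dt f x y t + b * dt g x y t)).
  { intros; apply derivable_pt_lim_plus; apply derivable_pt_lim_scal; now apply Ck1_dt_lim. }
  split; [|split; [|split; [|split]]].
  - now apply cont3_lin.
  - intros x y t ht. repeat split; eexists; eauto.
  - eapply Ck_ext; [|exact (IH _ _ f2 g2)].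
    intros x y t ht. symmetry. exact (dx_eq _ _ _ _ _ _ _ (fun _ => eq_refl) (Dx x y t ht) eq_refl).
  - eapply Ck_ext; [|exact (IH _ _ f3 g3)].
    intros x y t ht. symmetry. exact (dy_eq _ _ _ _ _ _ _ (fun _ => eq_refl) (Dy x y t ht) eq_refl).
  - eapply Ck_ext; [|exact (IH _ _ f4 g4)].
    intros x y t ht. symmetry.
    exact (dt_eq _ _ _ _ _ _ _ ht (fun _ _ => eq_refl) (Dt x y t ht) eq_refl).
Qed.

Lemma mixed_partials_eq (h : R -> R -> R) (u0 v0 : R) (D1 D2 D12 D21 : R -> R -> R) :
  locally_2d (fun u v =>
    derivable_pt_lim (fun z => h z v) u (D1 u v) /\
    derivable_pt_lim (fun z => h u z) v (D2 u v) /\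
    derivable_pt_lim (fun z => D2 z v) u (D21 u v) /\
    derivable_pt_lim (fun z => D1 u z) v (D12 u v)) u0 v0 ->
  continuity_2d_pt D21 u0 v0 -> continuity_2d_pt D12 u0 v0 ->
  D21 u0 v0 = D12 u0 v0.
Proof.
  intros H C21 C12.
  assert (E21 : locally_2d (fun u v =>
      is_derive (fun z => Derive (fun s => h z s) v) u (D21 u v)) u0 v0).
  { eapply locally_2d_impl_strong; [apply locally_2d_forall | exact H].
    intros u v Huv. apply is_derive_ext_loc with (f := fun z => D2 z v).
    - eapply filter_imp; [|exact (locally_2d_1d_const_y _ u v Huv)].
      intros z Hz. symmetry. apply is_derive_unique, is_derive_Reals, Hz.
    - apply is_derive_Reals, (locally_2d_singleton _ _ _ Huv). }
  assert (E12 : locally_2d (fun u v =>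
      is_derive (fun z => Derive (fun s => h s z) u) v (D12 u v)) u0 v0).
  { eapply locally_2d_impl_strong; [apply locally_2d_forall | exact H].
    intros u v Huv. apply is_derive_ext_loc with (f := fun z => D1 u z).
    - eapply filter_imp; [|exact (locally_2d_1d_const_x _ u v Huv)].
      intros z Hz. symmetry. apply is_derive_unique, is_derive_Reals, Hz.
    - apply is_derive_Reals, (locally_2d_singleton _ _ _ Huv). }
  rewrite <- (is_derive_unique _ _ _ (locally_2d_singleton _ _ _ E21)).
  rewrite <- (is_derive_unique _ _ _ (locally_2d_singleton _ _ _ E12)).
  apply Schwarz.
  - eapply locally_2d_impl; [|exact (locally_2d_and _ _ _ _ H (locally_2d_and _ _ _ _ E21 E12))].
    apply locally_2d_forall. intros u v [Huv [A B]].
    repeat split; eexists; eauto; apply is_derive_Reals, Huv.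
  - apply (continuity_2d_pt_ext_loc D21); [|exact C21].
    eapply locally_2d_impl; [apply locally_2d_forall | exact E21].
    intros u v A. symmetry. exact (is_derive_unique _ _ _ A).
  - apply (continuity_2d_pt_ext_loc D12); [|exact C12].
    eapply locally_2d_impl; [apply locally_2d_forall | exact E12].
    intros u v A. symmetry. exact (is_derive_unique _ _ _ A).
Qed.

Lemma cont3_slice_xt f x y t : cont3 f -> 0 < t -> continuity_2d_pt (fun a b => f a y b) x t.
Proof.
  intros H ht eps. destruct (H x y t ht eps (cond_pos eps)) as [d [hd hf]].
  exists (mkposreal d hd). intros u v hu hv. apply hf; auto. now rewrite Rminus_diag, Rabs_R0.
Qed.

Lemma cont3_slice_yt f x y t : cont3 f -> 0 < t -> continuity_2d_pt (fun a b => f x a b) y t.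
Proof.
  intros H ht eps. destruct (H x y t ht eps (cond_pos eps)) as [d [hd hf]].
  exists (mkposreal d hd). intros u v hu hv. apply hf; auto. now rewrite Rminus_diag, Rabs_R0.
Qed.

Lemma cont3_slice_xy f x y t : cont3 f -> 0 < t -> continuity_2d_pt (fun a b => f a b t) x y.
Proof.
  intros H ht eps. destruct (H x y t ht eps (cond_pos eps)) as [d [hd hf]].
  exists (mkposreal d hd). intros u v hu hv. apply hf; auto. now rewrite Rminus_diag, Rabs_R0.
Qed.

Lemma locally_2d_pos_time (P : R -> R -> Prop) x t : 0 < t ->
  (forall u v, 0 < v -> P u v) -> locally_2d P x t.
Proof.
  intros ht H. exists (mkposreal t ht). intros u v _ hv; simpl in hv.
  apply Rabs_def2 in hv. apply H; lra.
Qed.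

Lemma dx_dt_comm f x y t : Ck 2 f -> 0 < t -> dx (dt f) x y t = dt (dx f) x y t.
Proof.
  intros H ht. assert (H1 : Ck 1 f) by (eapply Ck_le; [|exact H]; lia).
  apply (mixed_partials_eq (fun a b => f a y b) x t (fun a b => dx f a y b) (fun a b => dt f a y b)
    (fun a b => dt (dx f) a y b) (fun a b => dx (dt f) a y b)).
  - apply locally_2d_pos_time; auto. intros u v hv.
    repeat split; apply Ck1_dx_lim || apply Ck1_dt_lim; auto; now apply Ck_dx || apply Ck_dt.
  - apply cont3_slice_xt; auto. apply (Ck_cont3 0), Ck_dx, Ck_dt, H.
  - apply cont3_slice_xt; auto. apply (Ck_cont3 0), Ck_dt, Ck_dx, H.
Qed.

Lemma dy_dt_comm f x y t : Ck 2 f -> 0 < t -> dy (dt f) x y t = dt (dy f) x y t.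
Proof.
  intros H ht. assert (H1 : Ck 1 f) by (eapply Ck_le; [|exact H]; lia).
  apply (mixed_partials_eq (fun a b => f x a b) y t (fun a b => dy f x a b) (fun a b => dt f x a b)
    (fun a b => dt (dy f) x a b) (fun a b => dy (dt f) x a b)).
  - apply locally_2d_pos_time; auto. intros u v hv.
    repeat split; apply Ck1_dy_lim || apply Ck1_dt_lim; auto; now apply Ck_dy || apply Ck_dt.
  - apply cont3_slice_yt; auto. apply (Ck_cont3 0), Ck_dy, Ck_dt, H.
  - apply cont3_slice_yt; auto. apply (Ck_cont3 0), Ck_dt, Ck_dy, H.
Qed.

Lemma dx_dy_comm f x y t : Ck 2 f -> 0 < t -> dx (dy f) x y t = dy (dx f) x y t.
Proof.
  intros H ht. assert (H1 : Ck 1 f) by (eapply Ck_le; [|exact H]; lia).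
  apply (mixed_partials_eq (fun a b => f a b t) x y (fun a b => dx f a b t) (fun a b => dy f a b t)
    (fun a b => dy (dx f) a b t) (fun a b => dx (dy f) a b t)).
  - apply locally_2d_forall. intros u v.
    repeat split; apply Ck1_dx_lim || apply Ck1_dy_lim; auto; now apply Ck_dx || apply Ck_dy.
  - apply cont3_slice_xy; auto. apply (Ck_cont3 0), Ck_dx, Ck_dy, H.
  - apply cont3_slice_xy; auto. apply (Ck_cont3 0), Ck_dy, Ck_dx, H.
Qed.

Definition divg (A B : fun3) : fun3 := fun x y t => dx A x y t + dy B x y t.

Lemma Ck_divg k A B : Ck (S k) A -> Ck (S k) B -> Ck k (divg A B).
Proof.
  intros HA HB. eapply Ck_ext; [|exact (Ck_lin k 1 1 _ _ (Ck_dx _ _ HA) (Ck_dy _ _ HB))].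
  intros; unfold divg; ring.
Qed.

Lemma Ck_Lap k u : Ck (S (S k)) u -> Ck k (Lap u).
Proof.
  intros H.
  eapply Ck_ext; [|exact (Ck_lin k 1 1 _ _ (Ck_dx _ _ (Ck_dx _ _ H)) (Ck_dy _ _ (Ck_dy _ _ H)))].
  intros; unfold Lap; ring.
Qed.

Create HintDb smooth discriminated.

Ltac ck :=
  repeat first [apply Ck_dx | apply Ck_dy | apply Ck_dt | apply Ck_Lap | apply Ck_divg];
  (eapply Ck_le; [|solve [eauto with smooth]]; lia).

Ltac dtac :=
  cbv beta;
  match goal with
  | |- derivable_pt_lim (fun s => ?G s ?y ?t) _ _ => apply Ck1_dx_lim; [ck | assumption]
  | |- derivable_pt_lim (fun s => ?G ?x s ?t) _ _ => apply Ck1_dy_lim; [ck | assumption]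
  | |- derivable_pt_lim (fun s => ?G ?x ?y s) _ _ => apply Ck1_dt_lim; [ck | assumption]
  | |- derivable_pt_lim (?G ?x ?y) _ _ => apply Ck1_dt_lim; [ck | assumption]
  | |- derivable_pt_lim (fun s => @?A s + @?B s) _ _ => apply derivable_pt_lim_plus; dtac
  | |- derivable_pt_lim (fun s => @?A s - @?B s) _ _ => apply derivable_pt_lim_minus; dtac
  | |- derivable_pt_lim (fun s => - @?A s) _ _ => apply derivable_pt_lim_opp; dtac
  | |- derivable_pt_lim (fun s => ?k * @?B s) _ _ => apply derivable_pt_lim_scal; dtac
  | |- derivable_pt_lim (fun s => @?A s * @?B s) _ _ => apply derivable_pt_lim_mult; dtac
  | |- derivable_pt_lim (fun s => ?k) _ _ => apply derivable_pt_lim_const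
  | |- _ => solve [eauto with smooth]
  end.

(* [diff_by tac] evaluates a partial derivative of a function that [tac] rewrites,
   on the relevant line, into an explicit expression which [dtac] differentiates;
   nested calls evaluate iterated partial derivatives. *)
Ltac diff_by tac :=
  first
    [ eapply dx_eq; [intros; tac | dtac | first [reflexivity | cbv beta; ring | cbv beta]]
    | eapply dy_eq; [intros; tac | dtac | first [reflexivity | cbv beta; ring | cbv beta]]
    | eapply dt_eq;
        [assumption | intros; tac | dtac | first [reflexivity | cbv beta; ring | cbv beta]] ].

Ltac diff := diff_by reflexivity.

Lemma dt_dxx_comm u x y t : Ck 3 u -> 0 < t -> dt (dx (dx u)) x y t = dx (dx (dt u)) x y t.
Proof.
  intros H ht. rewrite <- dx_dt_comm by (ck || assumption).
  apply dx_ext; intros s. symmetry. apply dx_dt_comm; [ck | assumption].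
Qed.

Lemma dt_dyy_comm u x y t : Ck 3 u -> 0 < t -> dt (dy (dy u)) x y t = dy (dy (dt u)) x y t.
Proof.
  intros H ht. rewrite <- dy_dt_comm by (ck || assumption).
  apply dy_ext; intros s. symmetry. apply dy_dt_comm; [ck | assumption].
Qed.

Lemma dt_dxdy_comm u x y t : Ck 3 u -> 0 < t -> dt (dx (dy u)) x y t = dx (dy (dt u)) x y t.
Proof.
  intros H ht. rewrite <- dx_dt_comm by (ck || assumption).
  apply dx_ext; intros s. symmetry. apply dy_dt_comm; [ck | assumption].
Qed.

Lemma dt_Lap_comm u x y t : Ck 3 u -> 0 < t -> dt (Lap u) x y t = Lap (dt u) x y t.
Proof.
  intros H ht.
  transitivity (dt (dx (dx u)) x y t + dt (dy (dy u)) x y t); [unfold Lap; diff|].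
  rewrite dt_dxx_comm, dt_dyy_comm by assumption. reflexivity.
Qed.

Lemma dxx_dyy_comm u x y t : Ck 4 u -> 0 < t ->
  dx (dx (dy (dy u))) x y t = dx (dy (dx (dy u))) x y t.
Proof. intros H ht. apply dx_ext; intros s. apply dx_dy_comm; [ck | assumption]. Qed.

Lemma dyy_dxx_comm u x y t : Ck 4 u -> 0 < t ->
  dy (dy (dx (dx u))) x y t = dx (dy (dx (dy u))) x y t.
Proof.
  intros H ht.
  transitivity (dy (dx (dy (dx u))) x y t).
  - apply dy_ext; intros s. symmetry. apply dx_dy_comm; [ck | assumption].
  - rewrite <- dx_dy_comm by (ck || assumption).
    apply dx_ext; intros s. apply dy_ext; intros s'. symmetry. apply dx_dy_comm; [ck | assumption].
Qed.

Lemma dxdy_Lap_comm u x y t : Ck 4 u -> 0 < t -> dx (dy (Lap u)) x y t = Lap (dx (dy u)) x y t.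
Proof.
  intros H ht.
  transitivity (dx (dy (dx (dx u))) x y t + dx (dy (dy (dy u))) x y t); [unfold Lap; diff_by diff|].
  unfold Lap. f_equal.
  - apply dx_ext; intros s. rewrite <- dx_dy_comm by (ck || assumption).
    apply dx_ext; intros s'. symmetry. apply dx_dy_comm; [ck | assumption].
  - rewrite dx_dy_comm by (ck || assumption). apply dy_ext; intros s.
    apply dx_dy_comm; [ck | assumption].
Qed.

Lemma Hyp_Hyp u x y t : Ck 4 u -> 0 < t ->
  Hyp (Hyp u) x y t = Lap (Lap u) x y t - 4 * dx (dy (dx (dy u))) x y t.
Proof.
  intros H ht.
  eassert (A : dx (dx (Hyp u)) x y t = _) by diff_by ltac:(diff_by ltac:(unfold Hyp; reflexivity)).
  eassert (B : dy (dy (Hyp u)) x y t = _) by diff_by ltac:(diff_by ltac:(unfold Hyp; reflexivity)).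
  eassert (C : dx (dx (Lap u)) x y t = _) by diff_by ltac:(diff_by ltac:(unfold Lap; reflexivity)).
  eassert (D : dy (dy (Lap u)) x y t = _) by diff_by ltac:(diff_by ltac:(unfold Lap; reflexivity)).
  unfold Hyp at 1, Lap at 1. rewrite A, B, C, D. cbv beta.
  rewrite dxx_dyy_comm, dyy_dxx_comm by assumption. ring.
Qed.

Ltac lap_by tac :=
  unfold Lap at 1;
  match goal with |- dx (dx ?F) ?x ?y ?t + dy (dy ?F) ?x ?y ?t = _ =>
    let A := fresh "A" in let B := fresh "B" in
    eassert (A : dx (dx F) x y t = _) by diff_by ltac:(diff_by tac);
    eassert (B : dy (dy F) x y t = _) by diff_by ltac:(diff_by tac);
    rewrite A, B; unfold Lap; cbv beta; ring
  end.

Lemma dt_divg_damped (k : R) (a : R -> R) (A B F G : fun3) x y t :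
  Ck 2 A -> Ck 2 B -> Ck 2 F -> Ck 2 G ->
  (forall x y t, 0 < t -> dt A x y t = k * divg F G x y t - a t * A x y t) ->
  (forall x y t, 0 < t -> dt B x y t = k * divg G F x y t - a t * B x y t) ->
  0 < t ->
  dt (divg A B) x y t = k * (Lap F x y t + 2 * dx (dy G) x y t) - a t * divg A B x y t.
Proof.
  intros HA HB HF HG EA EB ht.
  transitivity (dx (dt A) x y t + dy (dt B) x y t).
  - rewrite dx_dt_comm, dy_dt_comm by assumption. unfold divg; diff.
  - eassert (DA : dx (dt A) x y t = _)
      by diff_by ltac:(rewrite EA by assumption; unfold divg; reflexivity).
    eassert (DB : dy (dt B) x y t = _)
      by diff_by ltac:(rewrite EB by assumption; unfold divg; reflexivity).
    rewrite DA, DB, <- (dx_dy_comm G) by assumption. unfold Lap, divg. ring.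
Qed.

Definition sgn (b : bool) : R := if b then -1 else 1.

(* [mode sa sb] weights f_ab by a^[sa] b^[sb]; [mode false false] is p. *)
Definition mode (sa sb : bool) (fpp fpm fmp fmm : fun3) : fun3 := fun x y t =>
  fpp x y t + sgn sb * fpm x y t + sgn sa * fmp x y t + sgn sa * sgn sb * fmm x y t.

Lemma Ck_mode k sa sb fpp fpm fmp fmm :
  Ck k fpp -> Ck k fpm -> Ck k fmp -> Ck k fmm -> Ck k (mode sa sb fpp fpm fmp fmm).
Proof.
  intros Hpp Hpm Hmp Hmm.
  eapply Ck_ext; [|exact (Ck_lin k 1 1 _ _ (Ck_lin k 1 (sgn sb) _ _ Hpp Hpm)
                                         (Ck_lin k (sgn sa) (sgn sa * sgn sb) _ _ Hmp Hmm))].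
  intros; unfold mode; ring.
Qed.

Section Telegraph.

Variables (c : R) (lam lam1 lam2 : R -> R) (fpp fpm fmp fmm : fun3).
Hypothesis lam_deriv : forall t, 0 < t -> derivable_pt_lim lam t (lam1 t).
Hypothesis lam1_deriv : forall t, 0 < t -> derivable_pt_lim lam1 t (lam2 t).
Hypotheses (Hpp : Ck 4 fpp) (Hpm : Ck 4 fpm) (Hmp : Ck 4 fmp) (Hmm : Ck 4 fmm).
Hypothesis epp : forall x y t, 0 < t -> dt fpp x y t =
  - (c/2) * dx fpp x y t - (c/2) * dy fpp x y t
  + lam t / 2 * (fmp x y t + fpm x y t - 2 * fpp x y t).
Hypothesis epm : forall x y t, 0 < t -> dt fpm x y t =
  - (c/2) * dx fpm x y t + (c/2) * dy fpm x y t
  + lam t / 2 * (fmm x y t + fpp x y t - 2 * fpm x y t).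
Hypothesis emp : forall x y t, 0 < t -> dt fmp x y t =
  (c/2) * dx fmp x y t - (c/2) * dy fmp x y t
  + lam t / 2 * (fpp x y t + fmm x y t - 2 * fmp x y t).
Hypothesis emm : forall x y t, 0 < t -> dt fmm x y t =
  (c/2) * dx fmm x y t + (c/2) * dy fmm x y t
  + lam t / 2 * (fpm x y t + fmp x y t - 2 * fmm x y t).

Local Notation K := (c / 2).
Local Notation P := (mode false false fpp fpm fmp fmm).
Local Notation Q1 := (mode true false fpp fpm fmp fmm).
Local Notation Q2 := (mode false true fpp fpm fmp fmm).
Local Notation Q3 := (mode true true fpp fpm fmp fmm).

Lemma Ck4_mode sa sb : Ck 4 (mode sa sb fpp fpm fmp fmm).
Proof. now apply Ck_mode. Qed.

#[local] Hint Resolve lam_deriv lam1_deriv Ck4_mode : smooth.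

Lemma dt_mode sa sb x y t : 0 < t ->
  dt (mode sa sb fpp fpm fmp fmm) x y t =
    - K * divg (mode (negb sa) sb fpp fpm fmp fmm) (mode sa (negb sb) fpp fpm fmp fmm) x y t
    - (2 - sgn sa - sgn sb) / 2 * lam t * mode sa sb fpp fpm fmp fmm x y t.
Proof.
  intros ht.
  eassert (Et : dt (mode sa sb fpp fpm fmp fmm) x y t = _) by (unfold mode; diff).
  eassert (Ex : dx (mode (negb sa) sb fpp fpm fmp fmm) x y t = _) by (unfold mode; diff).
  eassert (Ey : dy (mode sa (negb sb) fpp fpm fmp fmm) x y t = _) by (unfold mode; diff).
  unfold divg. rewrite Et, Ex, Ey, epp, epm, emp, emm by assumption. unfold mode.
  destruct sa, sb; unfold sgn; simpl; field.
Qed.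

Lemma dt_P x y t : 0 < t -> dt P x y t = - K * divg Q1 Q2 x y t.
Proof. intros ht. rewrite dt_mode by assumption. unfold sgn; simpl. field. Qed.

Lemma dt_Q1 x y t : 0 < t -> dt Q1 x y t = - K * divg P Q3 x y t - lam t * Q1 x y t.
Proof. intros ht. rewrite dt_mode by assumption. unfold sgn; simpl. field. Qed.

Lemma dt_Q2 x y t : 0 < t -> dt Q2 x y t = - K * divg Q3 P x y t - lam t * Q2 x y t.
Proof. intros ht. rewrite dt_mode by assumption. unfold sgn; simpl. field. Qed.

Lemma dt_Q3 x y t : 0 < t -> dt Q3 x y t = - K * divg Q2 Q1 x y t - 2 * lam t * Q3 x y t.
Proof. intros ht. rewrite dt_mode by assumption. unfold sgn; simpl. field. Qed.

Local Notation S := (divg Q1 Q2).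
Local Notation V := (divg Q2 Q1).
Local Notation M := (dx (dy Q3)).
Local Notation N := (dx (dy V)).
Local Notation X := (dx (dy (dx (dy P)))).

Lemma dt_S x y t : 0 < t -> dt S x y t = - K * (Lap P x y t + 2 * M x y t) - lam t * S x y t.
Proof. intros ht. apply dt_divg_damped; first [ck | exact dt_Q1 | exact dt_Q2 | assumption]. Qed.

Lemma dt_V x y t : 0 < t ->
  dt V x y t = - K * (Lap Q3 x y t + 2 * dx (dy P) x y t) - lam t * V x y t.
Proof. intros ht. apply dt_divg_damped; first [ck | exact dt_Q2 | exact dt_Q1 | assumption]. Qed.

Lemma dt_M x y t : 0 < t -> dt M x y t = - K * N x y t - 2 * lam t * M x y t.
Proof.
  intros ht. rewrite dt_dxdy_comm by (ck || assumption).
  diff_by ltac:(diff_by ltac:(apply dt_Q3; assumption)).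
Qed.

Lemma dt_N x y t : 0 < t -> dt N x y t = - K * (Lap M x y t + 2 * X x y t) - lam t * N x y t.
Proof.
  intros ht. rewrite dt_dxdy_comm by (ck || assumption).
  rewrite <- dxdy_Lap_comm by (ck || assumption).
  diff_by ltac:(diff_by ltac:(apply dt_V; assumption)).
Qed.

Lemma Lap_dt_P x y t : 0 < t -> Lap (dt P) x y t = - K * Lap S x y t.
Proof. intros ht. lap_by ltac:(apply dt_P; assumption). Qed.

Lemma dt_Lap_P x y t : 0 < t -> dt (Lap P) x y t = - K * Lap S x y t.
Proof. intros ht. rewrite dt_Lap_comm by (ck || assumption). apply Lap_dt_P, ht. Qed.

Lemma dt_Lap_S x y t : 0 < t ->
  dt (Lap S) x y t = - K * (Lap (Lap P) x y t + 2 * Lap M x y t) - lam t * Lap S x y t.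
Proof.
  intros ht. rewrite dt_Lap_comm by (ck || assumption).
  lap_by ltac:(apply dt_S; assumption).
Qed.

Lemma dt2_P x y t : 0 < t ->
  dt (dt P) x y t = K ^ 2 * (Lap P x y t + 2 * M x y t) + K * lam t * S x y t.
Proof. intros ht. diff_by ltac:(apply dt_P; assumption). rewrite dt_S by assumption. ring. Qed.

Lemma dt3_P x y t : 0 < t -> dt (dt (dt P)) x y t =
  - K ^ 3 * Lap S x y t - 2 * K ^ 3 * N x y t - 6 * K ^ 2 * lam t * M x y t
  - K ^ 2 * lam t * Lap P x y t + K * (lam1 t - lam t * lam t) * S x y t.
Proof.
  intros ht. diff_by ltac:(apply dt2_P; assumption).
  rewrite dt_Lap_P, dt_M, dt_S by assumption. ring.
Qed.

Lemma dt4_P x y t : 0 < t -> dt (dt (dt (dt P))) x y t =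
  K ^ 4 * Lap (Lap P) x y t + 4 * K ^ 4 * Lap M x y t + 2 * K ^ 3 * lam t * Lap S x y t
  + 4 * K ^ 4 * X x y t + 8 * K ^ 3 * lam t * N x y t
  + K ^ 2 * (14 * lam t ^ 2 - 8 * lam1 t) * M x y t
  + K ^ 2 * (lam t ^ 2 - 2 * lam1 t) * Lap P x y t
  + K * (lam2 t - 3 * lam t * lam1 t + lam t ^ 3) * S x y t.
Proof.
  intros ht. diff_by ltac:(apply dt3_P; assumption).
  rewrite dt_Lap_S, dt_N, dt_M, dt_Lap_P, dt_S by assumption. ring.
Qed.

Lemma Lap_dt2_P x y t : 0 < t ->
  Lap (dt (dt P)) x y t = K ^ 2 * (Lap (Lap P) x y t + 2 * Lap M x y t) + K * lam t * Lap S x y t.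
Proof. intros ht. lap_by ltac:(apply dt2_P; assumption). Qed.

Lemma telegraph_fourth_order x y t : 0 < t ->
  dt (dt (dt (dt P))) x y t =
    - 4 * lam t * dt (dt (dt P)) x y t
    + ((c^2/2) * Lap (dt (dt P)) x y t
       - (5 * (lam t)^2 + 4 * lam1 t) * dt (dt P) x y t)
    + (lam t * c^2 * Lap (dt P) x y t
       - (5 * lam t * lam1 t + 2 * (lam t)^3 + lam2 t) * dt P x y t)
    - (c^4/16) * Hyp (Hyp P) x y t
    + (c^2/2) * ((lam t)^2 + lam1 t) * Lap P x y t.
Proof.
  intros ht.
  rewrite dt4_P, dt3_P, Lap_dt2_P, dt2_P, Lap_dt_P, dt_P, Hyp_Hyp by (ck || assumption).
  field.
Qed.

End Telegraph.

Theorem theorem5p1 (c : R) (lam lam1 lam2 : R -> R)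
  (fpp fpm fmp fmm : R -> R -> R -> R)
  (hc : 0 < c)
  (hl1 : forall t, 0 < t -> derivable_pt_lim lam t (lam1 t))
  (hl2 : forall t, 0 < t -> derivable_pt_lim lam1 t (lam2 t))
  (hl2c : forall t, 0 < t -> continuity_pt lam2 t)
  (hpp : Ck 4 fpp) (hpm : Ck 4 fpm) (hmp : Ck 4 fmp) (hmm : Ck 4 fmm)
  (epp : forall x y t, 0 < t -> dt fpp x y t =
     - (c/2) * dx fpp x y t - (c/2) * dy fpp x y t
     + lam t / 2 * (fmp x y t + fpm x y t - 2 * fpp x y t))
  (epm : forall x y t, 0 < t -> dt fpm x y t =
     - (c/2) * dx fpm x y t + (c/2) * dy fpm x y t
     + lam t / 2 * (fmm x y t + fpp x y t - 2 * fpm x y t))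
  (emp : forall x y t, 0 < t -> dt fmp x y t =
     (c/2) * dx fmp x y t - (c/2) * dy fmp x y t
     + lam t / 2 * (fpp x y t + fmm x y t - 2 * fmp x y t))
  (emm : forall x y t, 0 < t -> dt fmm x y t =
     (c/2) * dx fmm x y t + (c/2) * dy fmm x y t
     + lam t / 2 * (fpm x y t + fmp x y t - 2 * fmm x y t)) :
  let p : R -> R -> R -> R := fun x y t => fpp x y t + fpm x y t + fmp x y t + fmm x y t in
  forall x y t, 0 < t ->
    dt (dt (dt (dt p))) x y t =
      - 4 * lam t * dt (dt (dt p)) x y t
      + ((c^2/2) * Lap (dt (dt p)) x y t
         - (5 * (lam t)^2 + 4 * lam1 t) * dt (dt p) x y t)
      + (lam t * c^2 * Lap (dt p) x y t
         - (5 * lam t * lam1 t + 2 * (lam t)^3 + lam2 t) * dt p x y t)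
      - (c^4/16) * Hyp (Hyp p) x y t
      + (c^2/2) * ((lam t)^2 + lam1 t) * Lap p x y t.
Proof.
  intros p x y t ht.
  assert (Hp : p = mode false false fpp fpm fmp fmm).
  { extensionality x'; extensionality y'; extensionality t'.
    unfold p, mode, sgn. ring. }
  rewrite Hp. now apply telegraph_fourth_order.
Qed.
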